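(* Let $n\in\mathbb N$ and write $n=mp+c$ with $m\in\mathbb N_0$ and $0\le c<p$. Then the sign representation $\mathrm{sgn}(n)$ of $\mathfrak S_n$ is isomorphic to the signed Young module $Y((1^c)|(mp))$.
   Context: $F$ is a field of odd prime characteristic $p$; $\mathfrak S_n$ is the symmetric group on $\{1,\dots,n\}$. $(1^c)$ is the partition with $c$ parts equal to $1$, and $(mp)=p\cdot(m)$ (empty if $m=0$). For a pair $(\alpha|\beta)$ of partitions with $|\alpha|+|\beta|=n$ (the set of these is $\mathscr P^2(n)$), $M(\alpha|\beta)=\mathrm{Ind}_{\mathfrak S_\alpha\times\mathfrak S_\beta}^{\mathfrak S_n}(F\boxtimes\mathrm{sgn})$ with $\mathfrak S_\alpha$ the Young subgroup of $\{1,\dots,|\alpha|\}$ acting trivially and $\mathfrak S_\beta$ the Young subgroup of $\{|\alpha|+1,\dots,n\}$ acting by sign. Dominance: $(\lambda|\nu)\trianglerighteq(\alpha|\beta)$ iff for all $k\ge1$, $\sum_{i\le k}\lambda_i\ge\sum_{i\le k}\alpha_i$ and $|\lambda|+\sum_{i\le k}\nu_i\ge|\alpha|+\sum_{i\le k}\beta_i$. Signed Young module $Y(\lambda|p\mu)$ (partitions $\lambda,\mu$, $|\lambda|+p|\mu|=n$): the unique (up to isomorphism) indecomposable summand of $M(\lambda|p\mu)$ that is a summand of $M(\alpha|\beta)$, $(\alpha|\beta)\in\mathscr P^2(n)$, only if $(\lambda|p\mu)\trianglerighteq(\alpha|\beta)$. *)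

From HB Require Import structures.
From mathcomp Require Import all_boot all_order all_algebra all_fingroup.
From mathcomp Require Import mxrepresentation.
Unset Printing Implicit Defensive.
Import GRing.Theory.
Local Open Scope ring_scope.

Definition is_partition (s : seq nat) : bool :=
  sorted geq s && all (fun x => 0 < x)%N s.

Definition pdominates (lam nu al be : seq nat) : Prop :=
  forall k : nat, (0 < k)%N ->
    (sumn (take k al) <= sumn (take k lam))%N /\
    (sumn al + sumn (take k be) <= sumn lam + sumn (take k nu))%N.

Definition ones (c : nat) : seq nat := nseq c 1%N.
Definition pmul (p : nat) (mu : seq nat) : seq nat := map (muln p) mu.
Definition row_part (m : nat) : seq nat := if m is 0 then [::] else [:: m].

Definition Sym (n : nat) : {group 'S_n} := [set: 'S_n]%G.

Definition sgn_mx (F : fieldType) (n : nat) (g : 'S_n) : 'M[F]_1 :=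
  ((-1) ^+ (odd_perm g))%:M.

Lemma sgn_mx_repr (F : fieldType) (n : nat) : mx_repr (Sym n) (@sgn_mx F n).
Proof.
split; first by rewrite /sgn_mx odd_perm1 expr0.
move=> x y _ _; rewrite /sgn_mx odd_permM signr_addb -scalar_mxM.
by [].
Qed.

Definition sgn_repr (F : fieldType) (n : nat) : mx_representation F (Sym n) 1 :=
  MxRepresentation (sgn_mx_repr F n).

(* block index of point i for the composition s = al ++ be: blocks are the
   consecutive intervals of lengths s_1, s_2, ... *)
Definition blk (s : seq nat) (i : nat) : nat :=
  count (fun j => sumn (take j.+1 s) <= i)%N (iota 0 (size s)).

(* Young subgroup S_al x S_be: S_al on {1..|al|}, S_be on {|al|+1..n} *)
Definition young (n : nat) (al be : seq nat) : {set 'S_n} :=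
  [set g : 'S_n | [forall i : 'I_n, blk (al ++ be) (g i) == blk (al ++ be) i]].

(* the points on which S_be acts (0-based: |al| <= i) *)
Definition beta_pts (n : nat) (al : seq nat) : {set 'I_n} :=
  [set i : 'I_n | (sumn al <= i)%N].

(* the linear character F |x| sgn of S_al x S_be: sign of the S_be-component *)
Definition chi (F : fieldType) (n : nat) (al : seq nat) (h : 'S_n) : F :=
  (-1) ^+ (odd_perm (restr_perm (beta_pts n al) h)).

Definition ereg (F : fieldType) (n : nat) (x : 'S_n) : 'rV[F]_#|Sym n| :=
  delta_mx 0 (gring_index (Sym n) x).

(* e_H = sum_{h in H} chi(h) e_h ; the cyclic submodule of the regular module
   generated by e_H is Ind_H^G (chi), H = S_al x S_be. *)
Definition eYoung (F : fieldType) (n : nat) (al be : seq nat) : 'rV[F]_#|Sym n| :=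
  \sum_(h in young n al be) chi F n al h *: ereg F n h.

Definition Mperm (F : fieldType) (n : nat) (al be : seq nat) :=
  submod_repr (cyclic_mx_module (regular_repr F (Sym n)) (eYoung F n al be)).

Definition is_summand (F : fieldType) (gT : finGroupType) (G : {group gT})
    (d : nat) (rM : mx_representation F G d)
    (e : nat) (rY : mx_representation F G e) : Prop :=
  exists U : 'M[F]_d, exists modU : mxmodule rM U,
    (exists2 V : 'M[F]_d, mxmodule rM V &
       mxdirect (U + V) /\ (1%:M <= U + V)%MS)
    /\ mx_rsim (submod_repr modU) rY.
Arguments is_summand {F gT G d} rM {e} rY.

Definition indecomposable (F : fieldType) (gT : finGroupType) (G : {group gT})
    (e : nat) (rY : mx_representation F G e) : Prop :=
  (0 < e)%N /\
  forall U V : 'M[F]_e, mxmodule rY U -> mxmodule rY V ->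
    mxdirect (U + V) -> (1%:M <= U + V)%MS -> U = 0 \/ V = 0.
Arguments indecomposable {F gT G e} rY.

(* rY is (isomorphic to) the signed Young module Y(lam|p mu): by definition the
   unique (up to isomorphism) indecomposable summand of M(lam|p mu) which is a
   summand of M(al|be), (al|be) in P^2(n), only if (lam|p mu) dominates (al|be). *)
Definition is_signed_young (F : fieldType) (p n : nat) (lam mu : seq nat)
    (e : nat) (rY : mx_representation F (Sym n) e) : Prop :=
  [/\ indecomposable rY,
      is_summand (Mperm F n lam (pmul p mu)) rY &
      forall al be : seq nat, is_partition al -> is_partition be ->
        (sumn al + sumn be)%N = n ->
        is_summand (Mperm F n al be) rY -> pdominates lam (pmul p mu) al be].

Arguments is_signed_young F p n lam mu {e} rY.

(* The cyclic submodule of the regular module F[G] generated by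
   e_H = sum_(h in H) chi(h) h is the module induced from chi^-1 on H.  A
   one-dimensional module lam is a direct summand of it iff chi = lam^-1 on H
   and [G : H] is nonzero in F: the lam-line of F[G] is spanned by
   z = sum_x lam(x)^-1 x, which is the average of e_H over right coset
   representatives, and v |-> sum_C lam(r_C) v(r_C) is a G-map onto lam taking
   z to [G : H]; conversely, when [G : H] = 0 in F the averaging kills the
   lam-component of e_H, so z would also lie in a complement.
   For (1^c | (mp)) the Young subgroup is S_{n-c}, chi is the sign and
   [S_n : S_{n-c}] = n (n-1) ... (n-c+1) is prime to p.  If sgn is a summand
   of M(al|be), then chi = sgn on the Young subgroup; as p is odd, a
   transposition inside the first block of al forces al = (1^a), and then the
   index is divisible by n (n-1) ... (n-a+1), hence by n - c = mp unless
   a <= c, which gives the dominance. *)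

From Pilot Require Import Defs.
From HB Require Import structures.
From mathcomp Require Import all_boot all_order all_algebra all_fingroup.
From mathcomp Require Import mxrepresentation.

Set Implicit Arguments.
Unset Strict Implicit.
Unset Printing Implicit Defensive.
Import GRing.Theory.

Section LinearConstituents.

Local Open Scope ring_scope.

Variables (F : fieldType) (gT : finGroupType) (G : {group gT}).
Variable rL : mx_representation F G 1.

Local Notation aG := (regular_repr F G).
Local Notation lam x := (rL x 0 0).

Definition gring_coef (v : 'rV[F]_#|G|) (x : gT) : F := v 0 (gring_index G x).

Definition gring_vec (f : gT -> F) (A : {set gT}) : 'rV[F]_#|G| :=
  \sum_(x in A) f x *: delta_mx 0 (gring_index G x).

Lemma gring_coef_inj (v w : 'rV[F]_#|G|) : {in G, gring_coef v =1 gring_coef w} -> v = w.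
Proof.
move=> eq_vw; apply/rowP => i.
by have := eq_vw _ (enum_valP i); rewrite /gring_coef gring_valK.
Qed.

Lemma gring_coefZ a (v : 'rV[F]_#|G|) x : gring_coef (a *: v) x = a * gring_coef v x.
Proof. by rewrite /gring_coef mxE. Qed.

Lemma gring_coef_sum I (r : seq I) (P : pred I) (v : I -> 'rV[F]_#|G|) x :
  gring_coef (\sum_(i <- r | P i) v i) x = \sum_(i <- r | P i) gring_coef (v i) x.
Proof. by rewrite /gring_coef summxE. Qed.

Lemma gring_coef_delta x y : x \in G -> y \in G ->
  gring_coef (delta_mx 0 (gring_index G x)) y = (x == y)%:R.
Proof.
move=> Gx Gy; rewrite /gring_coef mxE eqxx /=.
by rewrite (inj_in_eq (can_in_inj (@gring_indexK _ G))) // eq_sym.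
Qed.

Lemma gring_coef_vec f (A : {set gT}) y : A \subset G -> y \in G ->
  gring_coef (gring_vec f A) y = if y \in A then f y else 0.
Proof.
move=> sAG Gy; rewrite /gring_vec gring_coef_sum.
rewrite (eq_bigr (fun x => f x * (x == y)%:R)) => [|x Ax]; last first.
  by rewrite gring_coefZ gring_coef_delta // (subsetP sAG).
case: ifP => [Ay | /negbT nAy].
  rewrite (bigD1 y) //= eqxx mulr1 big1 ?addr0 // => x /andP[_ /negbTE->].
  by rewrite mulr0.
by rewrite big1 // => x Ax; case: eqP => [xy|_]; [by rewrite -xy Ax in nAy | exact: mulr0].
Qed.

Lemma gring_coef_regular (v : 'rV[F]_#|G|) g y : g \in G -> y \in G ->
  gring_coef (v *m aG g) y = gring_coef v (y * g^-1)%g.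
Proof.
move=> Gg Gy; rewrite /gring_coef mxE (bigD1 (gring_index G (y * g^-1))) //=.
rewrite big1 ?addr0 => [|i ne]; rewrite !mxE /=.
  by rewrite gring_indexK ?groupM ?groupV // mulgKV !eqxx mulr1.
rewrite (inj_in_eq (can_in_inj (@gring_indexK _ G))) ?groupM ?enum_valP //.
case: eqP => [yE|_]; last by rewrite mulr0.
by rewrite yE mulgK gring_valK eqxx in ne.
Qed.

Lemma lin_reprM : {in G &, forall x y, lam (x * y)%g = lam x * lam y}.
Proof.
by move=> x y Gx Gy /=; rewrite repr_mxM // {1}[rL x]mx11_scalar mul_scalar_mx mxE.
Qed.

Lemma lin_repr1 : lam 1%g = 1.
Proof. by rewrite repr_mx1 mxE. Qed.

Lemma lin_reprVK x : x \in G -> lam x^-1%g * lam x = 1.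
Proof. by move=> Gx; rewrite -lin_reprM ?groupV // mulVg repr_mx1 mxE. Qed.

Definition lin_vec : 'rV[F]_#|G| := gring_vec (fun x => lam x^-1%g) G.

Lemma gring_coef_lin_vec x : x \in G -> gring_coef lin_vec x = lam x^-1%g.
Proof. by move=> Gx; rewrite gring_coef_vec ?Gx. Qed.

Lemma lin_vecJ g : g \in G -> lin_vec *m aG g = lam g *: lin_vec.
Proof.
move=> Gg; apply: gring_coef_inj => y Gy.
rewrite gring_coef_regular // gring_coefZ !gring_coef_lin_vec ?groupM ?groupV //.
by rewrite invMg invgK lin_reprM ?groupV.
Qed.

Lemma lin_vec_neq0 : lin_vec != 0.
Proof.
apply/negP => /eqP z0; have := gring_coef_lin_vec (group1 G).
by rewrite z0 /gring_coef mxE invg1 lin_repr1 => /eqP; rewrite eq_sym oner_eq0.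
Qed.

Lemma regular_lin_eigen (w : 'rV[F]_#|G|) :
  (forall g, g \in G -> w *m aG g = lam g *: w) -> w = gring_coef w 1%g *: lin_vec.
Proof.
move=> wJ; apply: gring_coef_inj => x Gx.
have := congr1 (gring_coef^~ x) (wJ x Gx).
rewrite gring_coef_regular // mulgV gring_coefZ gring_coef_lin_vec // => ->.
by rewrite gring_coefZ mulrAC [lam x * _]mulrC lin_reprVK // mul1r.
Qed.

Lemma lin_indecomposable : indecomposable rL.
Proof.
split=> // U V _ _ /mxdirect_addsP/mxrank_disjoint_sum rankUV _.
have : (\rank U + \rank V <= 1)%N by rewrite -rankUV rank_leq_col.
case: (eqVneq U 0) => [-> _|]; [by left | rewrite -mxrank_eq0 => rankU le1; right].
apply/eqP; rewrite -mxrank_eq0; move: rankU le1.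
by case: (\rank U) => [|[|]] //; case: (\rank V).
Qed.

Section EigenLine.

Variables (d : nat) (rG : mx_representation F G d).

Lemma lin_eigen_sub m (X : 'M_(m, d)) (u : 'rV_d) g : (X <= u)%MS -> g \in G ->
  u *m rG g = lam g *: u -> X *m rG g = lam g *: X.
Proof. by case/submxP=> D -> Gg uJ; rewrite -mulmxA uJ scalemxAr. Qed.

Lemma lin_eigen_module (u : 'rV_d) :
  (forall g, g \in G -> u *m rG g = lam g *: u) -> mxmodule rG <<u>>%MS.
Proof.
move=> uJ; apply/mxmoduleP => g Gg; rewrite (eqmxMr _ (genmxE u)) genmxE.
by rewrite uJ // scalemx_sub.
Qed.

Lemma lin_eigen_rsim (u : 'rV_d) (modU : mxmodule rG <<u>>%MS) : u != 0 ->
  (forall g, g \in G -> u *m rG g = lam g *: u) -> mx_rsim (submod_repr modU) rL.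
Proof.
move=> u_neq0 uJ; have rankU : \rank <<u>>%MS = 1%N by rewrite genmxE rank_rV u_neq0.
have B_free : row_free (const_mx 1 : 'M[F]_(\rank <<u>>%MS, 1)).
  rewrite /row_free rankU eqn_leq rank_leq_col lt0n mxrank_eq0.
  by apply/negP => /eqP/matrixP/(_ 0 0); rewrite !mxE => /eqP; rewrite oner_eq0.
apply: (MxReprSim rankU B_free) => g Gg.
have U1J : @val_submod _ _ <<u>>%MS _ 1%:M *m rG g = lam g *: val_submod 1%:M.
  by apply: lin_eigen_sub (uJ _ Gg) => //; rewrite -(genmxE u) val_submodP.
rewrite /= /submod_mx U1J linearZ /= val_submodK [rL g]mx11_scalar mul_mx_scalar.
by rewrite -scalemxAl mul1mx mxE.
Qed.

Lemma rsim_lin_eigen (U : 'M_d) (modU : mxmodule rG U) (u : 'rV_d) g :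
  mx_rsim (submod_repr modU) rL -> (u <= U)%MS -> g \in G -> u *m rG g = lam g *: u.
Proof.
move=> simU uU Gg; have := mx_rsim_scalar Gg (mx_rsim_sym simU) (mx11_scalar (rL g)).
rewrite -(in_submodK uU) -val_submodJ // => ->.
by rewrite mul_mx_scalar linearZ.
Qed.

Lemma lin_summand_form (z : 'rV_d) (Phi : 'cV_d) :
    (forall g, g \in G -> z *m rG g = lam g *: z) ->
    (forall g, g \in G -> rG g *m Phi = lam g *: Phi) ->
  (z *m Phi) 0 0 != 0 -> is_summand rG rL.
Proof.
move=> zJ PhiJ zPhi_neq0; set a := (z *m Phi) 0 0.
have z_neq0 : z != 0 by apply: contraNneq zPhi_neq0 => ->; rewrite mul0mx mxE.
have zPhi : z *m Phi = a%:M := mx11_scalar _.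
exists <<z>>%MS, (lin_eigen_module zJ); split; last exact: lin_eigen_rsim.
exists (kermx Phi).
  by apply/mxmoduleP => g Gg; rewrite sub_kermx -mulmxA PhiJ // -scalemxAr mulmx_ker scaler0.
split.
  apply/mxdirect_addsP/eqP; rewrite -submx0; apply/rV_subP => w.
  rewrite sub_capmx genmxE => /andP[/submxP[D ->]].
  rewrite sub_kermx -mulmxA zPhi mul_mx_scalar scaler_eq0 (negbTE zPhi_neq0) /=.
  by move=> /eqP->; rewrite mul0mx sub0mx.
apply/rV_subP => y _; pose b := (y *m Phi) 0 0 / a.
rewrite -[y](subrK (b *: z)) addrC; apply: addmx_sub_adds.
  by rewrite genmxE scalemx_sub.
rewrite sub_kermx mulmxBl -scalemxAl zPhi scale_scalar_mx mulfVK //.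
by rewrite -mx11_scalar subrr.
Qed.

End EigenLine.

Lemma rsim_lin_vec_sub (W : 'M_#|G|) (modW : mxmodule aG W) (U : 'M_(\rank W))
    (modU : mxmodule (submod_repr modW) U) :
  mx_rsim (submod_repr modU) rL -> (lin_vec <= W)%MS /\ (in_submod W lin_vec <= U)%MS.
Proof.
move=> simU; have U_neq0 : U != 0 by rewrite -mxrank_eq0 (mxrank_rsim simU).
set y := nz_row U; set w := val_submod y.
have wJ g : g \in G -> w *m aG g = lam g *: w.
  move=> Gg; rewrite -(val_submodJ modW) // (rsim_lin_eigen simU) ?nz_row_sub //.
  exact: linearZ.
set c := gring_coef w 1%g.
have c_neq0 : c != 0.
  apply: contraNneq U_neq0 => c0; rewrite -nz_row_eq0 -/y -val_submod_eq0 -/w.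
  by rewrite (regular_lin_eigen wJ) -/c c0 scale0r.
have zE : lin_vec = c^-1 *: w by rewrite [in RHS](regular_lin_eigen wJ) scalerK.
split; first by rewrite zE scalemx_sub ?val_submodP.
by rewrite zE linearZ /= val_submodK scalemx_sub ?nz_row_sub.
Qed.

Section InducedLinear.

Variables (H : {group gT}) (chi : gT -> F).
Hypothesis sHG : H \subset G.

Local Notation eH := (gring_vec chi H).
Local Notation W := (cyclic_mx aG eH).

Lemma repr_rcosets_in C : C \in rcosets H G -> repr C \in G.
Proof.
case/rcosetsP=> x Gx ->; have /rcosetP[h Hh ->] := mem_repr_rcoset H x.
by rewrite groupM // (subsetP sHG).
Qed.

Lemma rcosets_repr_mem C y : C \in rcosets H G ->
  ((y * (repr C)^-1)%g \in H) = (C == H :* y)%g.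
Proof.
by case/rcosetsP=> x _ ->; rewrite -mem_rcoset (sameP rcoset_eqP eqP) rcoset_repr eq_sym.
Qed.

Lemma sum_rcosets_reprM (phi : gT -> F) g :
    {in H & G, forall h x, phi (h * x)%g = phi x} -> g \in G ->
  \sum_(C in rcosets H G) phi (repr C * g)%g = \sum_(C in rcosets H G) phi (repr C).
Proof.
move=> phiH Gg; rewrite [RHS](reindex_acts 'Rs (actsRs_rcosets H G) Gg).
apply: eq_bigr => _ /rcosetsP[x Gx ->] /=.
have phi_repr y : y \in G -> phi (repr (H :* y)%g) = phi y.
  by move=> Gy; have /rcosetP[h Hh ->] := mem_repr_rcoset H y; rewrite phiH.
have /rcosetP[h Hh ->] := mem_repr_rcoset H x.
by rewrite rcosetE -rcosetM phi_repr ?groupM // -mulgA (phiH h (x * g)%g) ?groupM.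
Qed.

Lemma gring_coef_cyclicMl (v : 'rV[F]_#|G|) :
    {in H &, forall x y, chi (x * y)%g = chi x * chi y} -> (v <= W)%MS ->
  {in H & G, forall h y, gring_coef v (h * y)%g = chi h * gring_coef v y}.
Proof.
move=> chiM /cyclic_mxP[A /envelop_mxP[a ->] ->] h y Hh Gy.
have Gh := subsetP sHG h Hh.
rewrite !mulmx_sumr !gring_coef_sum mulr_sumr; apply: eq_bigr => x Gx.
have Gyx : (y * x^-1)%g \in G by rewrite groupM ?groupV.
rewrite -!scalemxAr !gring_coefZ !gring_coef_regular ?groupM // -mulgA.
rewrite (gring_coef_vec _ sHG Gyx) (gring_coef_vec _ sHG (groupM Gh Gyx)) groupMl //.
by rewrite mulrCA; case: ifP => Hyx; rewrite ?mulr0 // chiM.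
Qed.

Definition coset_col : 'cV[F]_#|G| :=
  \sum_(C in rcosets H G) lam (repr C) *: delta_mx (gring_index G (repr C)) 0.

Lemma coset_colE (v : 'rV[F]_#|G|) : (v *m coset_col) 0 0 =
  \sum_(C in rcosets H G) lam (repr C) * gring_coef v (repr C).
Proof.
rewrite mulmx_sumr summxE; apply: eq_bigr => C _.
by rewrite -scalemxAr mxE -colE mxE.
Qed.

Lemma coset_col_lin_vec : (lin_vec *m coset_col) 0 0 = #|G : H|%g%:R.
Proof.
rewrite coset_colE (eq_bigr (fun=> 1)) ?sumr_const // => C /repr_rcosets_in GrC.
by rewrite gring_coef_lin_vec // mulrC lin_reprVK.
Qed.

Section InverseRestriction.

Hypothesis chiE : {in H, forall h, chi h = lam h^-1%g}.

Lemma chi_linM : {in H &, forall x y, chi (x * y)%g = chi x * chi y}.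
Proof.
move=> x y Hx Hy; rewrite !chiE ?groupM // invMg mulrC.
by rewrite lin_reprM ?groupV ?(subsetP sHG).
Qed.

Lemma lin_vec_cosets :
  \sum_(C in rcosets H G) lam (repr C)^-1%g *: (eH *m aG (repr C)) = lin_vec.
Proof.
apply: gring_coef_inj => y Gy; rewrite gring_coef_sum gring_coef_lin_vec //.
transitivity (\sum_(C in rcosets H G) (C == H :* y)%g%:R * lam y^-1%g).
  apply: eq_bigr => C HC; have GrC := repr_rcosets_in HC.
  have Gyr : (y * (repr C)^-1)%g \in G by rewrite groupM ?groupV.
  rewrite gring_coefZ gring_coef_regular // (gring_coef_vec _ sHG Gyr).
  rewrite -(@rcosets_repr_mem C y HC); case: ifP => [Hy|_]; last by rewrite mulr0 mul0r.
  by rewrite chiE // mul1r invMg invgK lin_reprM ?groupV // mulrA lin_reprVK // mul1r.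
have HyG : (H :* y)%g \in rcosets H G by apply/rcosetsP; exists y.
rewrite (bigD1 (H :* y)%g) //= eqxx mul1r big1 ?addr0 // => C /andP[_ /negbTE->].
by rewrite mul0r.
Qed.

Lemma coset_colJ (v : 'rV[F]_#|G|) g : (v <= W)%MS -> g \in G ->
  (v *m aG g *m coset_col) 0 0 = lam g * (v *m coset_col) 0 0.
Proof.
move=> vW Gg.
pose phi x := lam x * gring_coef v x.
have phiH : {in H & G, forall h x, phi (h * x)%g = phi x}.
  move=> h x Hh Gx; have Gh := subsetP sHG h Hh.
  rewrite /phi (gring_coef_cyclicMl chi_linM vW) // lin_reprM // chiE // mulrACA.
  by rewrite [lam h * _]mulrC lin_reprVK // mul1r.
have := sum_rcosets_reprM phiH (groupVr Gg); rewrite !coset_colE /phi => <-.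
rewrite mulr_sumr; apply: eq_bigr => C /repr_rcosets_in GrC.
rewrite gring_coef_regular // /phi mulrA [lam g * _]mulrC -lin_reprM ?groupM ?groupV //.
by rewrite mulgKV.
Qed.

Lemma lin_summand_induced : (#|G : H|%g%:R : F) != 0 ->
  is_summand (submod_repr (cyclic_mx_module aG eH)) rL.
Proof.
move=> idx_neq0; set rW := submod_repr _.
have zW : (lin_vec <= W)%MS.
  rewrite -lin_vec_cosets; apply: summx_sub => C HC; apply: scalemx_sub.
  exact: mxmodule_trans (cyclic_mx_module _ _) (repr_rcosets_in HC) (cyclic_mx_id _ _).
pose Phi := @val_submod _ _ W _ 1%:M *m coset_col.
have PhiE (y : 'rV_(\rank W)) : y *m Phi = val_submod y *m coset_col.
  by rewrite mulmxA -val_submodE.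
apply: (@lin_summand_form _ rW (in_submod W lin_vec) Phi).
- by move=> g Gg; rewrite -in_submodJ // lin_vecJ // linearZ.
- move=> g Gg; apply/row_matrixP => i; apply/rowP => j.
  rewrite ord1 !rowE -scalemxAr mulmxA [RHS]mxE !PhiE val_submodJ //.
  by rewrite coset_colJ ?val_submodP.
by rewrite PhiE in_submodK // coset_col_lin_vec.
Qed.

End InverseRestriction.

Lemma lin_summand_induced_inv :
    {in H &, forall x y, chi (x * y)%g = chi x * chi y} ->
    is_summand (submod_repr (cyclic_mx_module aG eH)) rL ->
  {in H, forall h, chi h = lam h^-1%g} /\ (#|G : H|%g%:R : F) != 0.
Proof.
move=> chiM [U [modU [[V modV [dirUV fullUV]] simU]]].
set rW := submod_repr _ in modU modV simU *.
have [zW zU] := rsim_lin_vec_sub simU; set z := in_submod W lin_vec in zU.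
have chiE : {in H, forall h, chi h = lam h^-1%g}.
  move=> h Hh; have := gring_coef_cyclicMl chiM zW Hh (group1 G).
  by rewrite mulg1 !gring_coef_lin_vec ?(subsetP sHG) // invg1 lin_repr1 mulr1.
split=> //; apply/negP => /eqP idx0.
have z_neq0 : z != 0.
  by apply: contraNneq lin_vec_neq0 => z0; rewrite -(in_submodK zW) -/z z0 linear0.
have [[a b] /= eE] := sub_addsmxP (submx_trans (submx1 (in_submod W eH)) fullUV).
have zV : (z <= V)%MS.
  (* Averaging [eH] gives [lin_vec]; its [U]-part averages to [#|G : H|] times itself. *)
  rewrite /z -(lin_vec_cosets chiE) linear_sum /=.
  rewrite (eq_bigr (fun C => a *m U + lam (repr C)^-1%g *: (b *m V *m rW (repr C)))).
    rewrite big_split /= sumr_const -scaler_nat idx0 scale0r add0r.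
    apply: summx_sub => C /repr_rcosets_in GrC; apply: scalemx_sub.
    exact: mxmodule_trans modV GrC (submxMl b V).
  move=> C /repr_rcosets_in GrC.
  rewrite linearZ /= (in_submodJ (cyclic_mx_module aG eH)) ?cyclic_mx_id //.
  rewrite eE mulmxDl scalerDr.
  by rewrite (rsim_lin_eigen simU) ?submxMl // scalerA lin_reprVK // scale1r.
have : (z <= U :&: V)%MS by rewrite sub_capmx zU zV.
by move/mxdirect_addsP: dirUV => ->; rewrite submx0 (negbTE z_neq0).
Qed.

End InducedLinear.

End LinearConstituents.

Lemma sumn_take_leq (s : seq nat) j k : j <= k -> sumn (take j s) <= sumn (take k s).
Proof.
move=> le_jk; rewrite -(take_takel s le_jk) -{2}(cat_take_drop j (take k s)) sumn_cat.
exact: leq_addr.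
Qed.

Lemma sumn_take_ones a k : sumn (take k (ones a)) = minn k a.
Proof.
case: (leqP k a) => [le_ka | /ltnW le_ak].
  by rewrite take_nseq // sumn_nseq mul1n.
by rewrite take_oversize ?size_nseq // sumn_nseq mul1n.
Qed.

Section Blocks.

Variable s : seq nat.

Lemma blk_size i : blk s i <= size s.
Proof. by apply: leq_trans (count_size _ _) _; rewrite size_iota. Qed.

Lemma blk_ge i k : k <= size s -> sumn (take k s) <= i -> k <= blk s i.
Proof.
move=> le_ks le_si; rewrite /blk -(subnKC le_ks) iotaD count_cat add0n.
apply: leq_trans (leq_addr _ _); rewrite (@eq_in_count _ _ predT) ?count_predT ?size_iota //.
move=> j; rewrite mem_iota add0n => /andP[_ lt_jk] /=.
exact: leq_trans (sumn_take_leq s lt_jk) le_si.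
Qed.

Lemma blk_le i k : k < size s -> i < sumn (take k.+1 s) -> blk s i <= k.
Proof.
move=> lt_ks lt_is; rewrite /blk -(subnKC (ltnW lt_ks)) iotaD count_cat add0n.
rewrite (@eq_in_count _ _ pred0 (iota k _)) ?count_pred0 ?addn0.
  by apply: leq_trans (count_size _ _) _; rewrite size_iota.
move=> j; rewrite mem_iota => /andP[le_kj _] /=; apply/negbTE; rewrite -ltnNge.
exact: leq_trans lt_is (sumn_take_leq s (le_kj : k.+1 <= j.+1)).
Qed.

End Blocks.

Lemma blk_cat_ge al be i : (sumn al <= i) = (size al <= blk (al ++ be) i).
Proof.
apply/idP/idP => [le_ai|]; first by apply: blk_ge; rewrite ?size_cat ?leq_addr ?take_size_cat.
apply: contraLR; rewrite -!ltnNge; case: al => [//|x al] lt_ia.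
by apply: blk_le; rewrite ?take_size_cat // size_cat /= ltnS leq_addr.
Qed.

Lemma sumn_take_ones_cat a be k : k <= a -> sumn (take k (ones a ++ be)) = k.
Proof.
by move=> le_ka; rewrite takel_cat ?size_nseq // sumn_take_ones (minn_idPl le_ka).
Qed.

Lemma blk_ones_lt a be i : i < a -> blk (ones a ++ be) i = i.
Proof.
move=> lt_ia; have lt_is : i < size (ones a ++ be).
  by rewrite size_cat size_nseq ltn_addr.
by apply/eqP; rewrite eqn_leq blk_le ?blk_ge ?sumn_take_ones_cat ?(ltnW lt_is) ?(ltnW lt_ia).
Qed.

Lemma blk_ones_ge a be i : a <= i -> a <= blk (ones a ++ be) i.
Proof.
by move=> le_ai; rewrite blk_ge ?sumn_take_ones_cat // size_cat size_nseq leq_addr.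
Qed.

Lemma blk_ones_row c be i : size be <= 1 -> c <= i < c + sumn be ->
  blk (ones c ++ be) i = c.
Proof.
move=> size_be /andP[le_ci lt_i]; apply/eqP; rewrite eqn_leq blk_ones_ge // andbT.
case: be size_be lt_i => [|b []] // _ lt_i.
  by apply: leq_trans (blk_size _ _) _; rewrite cats0 size_nseq.
apply: blk_le; first by rewrite size_cat size_nseq addn1.
by rewrite take_oversize ?size_cat ?size_nseq ?addn1 // sumn_cat sumn_nseq mul1n.
Qed.

Section YoungSubgroup.

Variable n : nat.

Lemma young_group_set al be : group_set (young n al be).
Proof.
apply/group_setP; split=> [|x y]; first by rewrite inE; apply/forallP => i; rewrite perm1.
rewrite !inE => /forallP xE /forallP yE; apply/forallP => i.
by rewrite permM (eqP (yE (x i))) (eqP (xE i)).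
Qed.

Canonical young_group al be := Group (young_group_set al be).

Lemma young_ones_perm_on a be h :
  h \in young n (ones a) be -> perm_on [set i : 'I_n | a <= i] h.
Proof.
rewrite inE => /forallP hE; apply/subsetP => i; rewrite !inE; apply: contraR.
rewrite -ltnNge => lt_ia; have := hE i; rewrite (blk_ones_lt _ lt_ia).
case: (ltnP (h i) a) => [lt_hia | le_ahi]; first by rewrite (blk_ones_lt _ lt_hia).
by move/eqP => hiE; have := blk_ones_ge be le_ahi; rewrite hiE leqNgt lt_ia.
Qed.

Lemma young_ones_row c be : size be <= 1 -> c + sumn be = n ->
  young n (ones c) be = perm.Sym [set i : 'I_n | c <= i].
Proof.
move=> size_be sum_n; apply/setP => g; rewrite [RHS]inE.
apply/idP/idP => [|g_on]; first exact: young_ones_perm_on.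
rewrite inE; apply/forallP => i; case: (ltnP i c) => [lt_ic | le_ci].
  by rewrite (out_perm g_on) // inE -ltnNge.
have le_cgi : c <= g i by have := perm_closed i g_on; rewrite !inE le_ci.
by rewrite !blk_ones_row // ?le_ci ?le_cgi sum_n ltn_ord.
Qed.

Lemma young_astabs al be h :
  h \in young n al be -> h \in 'N(beta_pts n al | 'P)%g.
Proof.
rewrite inE => /forallP hE; apply/astabsP => i /=.
by rewrite !inE !(blk_cat_ge al be) (eqP (hE i)).
Qed.

End YoungSubgroup.

Lemma ffact_subn_dvd n a k : k < a -> (n - k) %| n ^_ a.
Proof.
elim: a n k => [//|a IHa] n [|k] lt_ka; first by rewrite ffactnS subn0 dvdn_mulr.
by rewrite ffactnS subnS -subn1 subnAC subn1 dvdn_mull // IHa.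
Qed.

Lemma ffact_pdvd p m c j : prime p -> j <= c -> c < p -> ~~ (p %| (m * p + c) ^_ j).
Proof.
move=> p_pr; elim: j c => [|j IHj] c le_jc lt_cp.
  by rewrite ffactn0 dvdn1 neq_ltn prime_gt1 ?orbT.
have c_gt0 : 0 < c by apply: leq_trans le_jc.
rewrite ffactnS Euclid_dvdM // negb_or dvdn_addr ?dvdn_mull //.
rewrite gtnNdvd ?(leq_trans c_gt0) //= -subn1 -addnBA // subn1.
by rewrite IHj ?(leq_ltn_trans (leq_pred c)) // -ltnS prednK.
Qed.

Lemma card_ord_geq n c : #|[set i : 'I_n | c <= i]| = n - c.
Proof.
rewrite -sum1_card (eq_bigl (fun i : 'I_n => xpredT i && (c <= i))) => [|i].
  by rewrite -(big_geq_mkord c n xpredT (fun=> 1)) sum_nat_const_nat muln1.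
by rewrite inE.
Qed.

Lemma indexg_Sym_geq n c : c <= n ->
  #|Defs.Sym n : perm.Sym [set i : 'I_n | c <= i]|%g = n ^_ c.
Proof.
move=> le_cn; have := Lagrange (subsetT (perm.Sym_group [set i : 'I_n | c <= i])).
rewrite /= card_Sym card_ord_geq cardsT card_Sn -(ffact_fact le_cn) mulnC.
by move/eqP; rewrite eqn_pmul2r ?fact_gt0 // => /eqP.
Qed.

Lemma young_ones_indexg_dvd p m c n a be : prime p -> n = m * p + c ->
  a + sumn be = n -> c < a -> p %| #|Defs.Sym n : young n (ones a) be|%g.
Proof.
move=> p_pr n_eq sum_n lt_ca; have le_an : a <= n by rewrite -sum_n leq_addr.
case: m n_eq => [|m] n_eq; first by move: (leq_trans lt_ca le_an); rewrite n_eq ltnn.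
have sYS : young_group n (ones a) be \subset perm.Sym_group [set i : 'I_n | a <= i].
  by apply/subsetP => h /young_ones_perm_on; rewrite inE.
rewrite -(Lagrange_index (subsetT _) sYS) /= indexg_Sym_geq // dvdn_mulr //.
by apply: dvdn_trans (ffact_subn_dvd n lt_ca); rewrite n_eq addnK dvdn_mull.
Qed.

Lemma pdominates_ones_row p m c n a be : a <= c -> a + sumn be = n ->
  n = m * p + c -> pdominates (ones c) (pmul p (row_part m)) (ones a) be.
Proof.
move=> le_ac sum_n n_eq k k_gt0; rewrite !sumn_take_ones leq_min geq_minl /=.
split; first exact: leq_trans (geq_minr _ _) le_ac.
have -> : sumn (take k (pmul p (row_part m))) = m * p.
  by case: m {n_eq} => // m; case: k k_gt0 => // k _ /=; rewrite addn0 mulnC.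
rewrite /ones !sumn_nseq !mul1n [c + _]addnC -n_eq -sum_n leq_add2l.
by rewrite -{2}(cat_take_drop k be) sumn_cat leq_addr.
Qed.


Section SignedYoung.

Variables (F : fieldType) (n : nat).
Local Open Scope ring_scope.

Lemma sgn_repr_coef (x : 'S_n) : sgn_repr F n x 0 0 = (-1) ^+ odd_perm x.
Proof. by rewrite /= /sgn_mx mxE. Qed.

Lemma young_chiM al be :
  {in young n al be &, forall x y, chi F n al (x * y)%g = chi F n al x * chi F n al y}.
Proof.
move=> x y Yx Yy; rewrite /chi (morphM _ (young_astabs Yx) (young_astabs Yy)) /=.
by rewrite (@odd_permM _ (restr_perm _ x)) signr_addb.
Qed.

Lemma chi_ones c h : h \in perm.Sym [set i : 'I_n | (c <= i)%N] ->
  chi F n (ones c) h = (-1) ^+ odd_perm h.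
Proof.
rewrite inE => h_on; rewrite /chi.
have -> : beta_pts n (ones c) = [set i : 'I_n | (c <= i)%N].
  by apply/setP => i; rewrite !inE sumn_nseq mul1n.
congr (_ ^+ odd_perm _); apply/permP => i.
have [Si | nSi] := boolP (i \in [set i : 'I_n | (c <= i)%N]).
  by rewrite restr_permE //; apply/astabsP => j /=; apply: perm_closed.
by rewrite !(out_perm _ nSi) // restr_perm_on.
Qed.

Lemma young_tperm x al be : (1 < x)%N -> (sumn (x :: al) + sumn be)%N = n ->
  exists2 t, t \in young n (x :: al) be & chi F n (x :: al) t = 1 /\ odd_perm t.
Proof.
move=> x_gt1 sum_n; have n_gt1 : (1 < n)%N.
  by rewrite -sum_n /= -addnA (leq_trans x_gt1) ?leq_addr.
pose i0 := Ordinal (ltnW n_gt1); pose i1 := Ordinal n_gt1.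
have lt_x j k : (j < 2)%N -> (j < x + k)%N.
  by move=> lt_j2; rewrite (leq_trans lt_j2 (leq_trans x_gt1 (leq_addr _ _))).
have blk01 j : (j < 2)%N -> blk ((x :: al) ++ be) j = 0%N.
  move=> lt_j2; rewrite /blk (@eq_in_count _ _ pred0) ?count_pred0 // => k _ /=.
  by apply/negbTE; rewrite -ltnNge lt_x.
exists (tperm i0 i1); last split; last by rewrite odd_tperm.
  rewrite inE; apply/forallP => j.
  by case: (tpermP i0 i1 j) => [->|->|_ _] //; rewrite !blk01.
rewrite /chi; have -> : restr_perm (beta_pts n (x :: al)) (tperm i0 i1) = 1%g.
  apply: mker; rewrite ker_restr_perm; apply/astabP => j.
  rewrite inE /= => le_j.
  by apply: tpermD; apply/eqP => eq_j; move: le_j; rewrite -eq_j /= leqNgt lt_x.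
by rewrite odd_perm1.
Qed.

(* [Mperm F n al be] is, up to conversion, the cyclic module generated by
   [gring_vec (chi F n al) (young n al be)]. *)
Lemma sgn_summand_Mperm al be :
    is_summand (Mperm F n al be) (sgn_repr F n) ->
  {in young n al be, forall h, chi F n al h = (-1) ^+ odd_perm h} /\
  (#|Defs.Sym n : young n al be|%g%:R : F) != 0.
Proof.
case/(lin_summand_induced_inv (subsetT (young_group n al be)) (@young_chiM al be)).
by move=> chiE idx_neq0; split=> // h Yh; rewrite chiE // sgn_repr_coef odd_permV.
Qed.

Lemma Mperm_ones_row_sgn p m c : prime p -> p \in [pchar F] -> (c < p)%N ->
  n = (m * p + c)%N -> is_summand (Mperm F n (ones c) (pmul p (row_part m))) (sgn_repr F n).
Proof.
move=> p_pr charF lt_cp n_eq.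
have defY : young n (ones c) (pmul p (row_part m)) = perm.Sym [set i : 'I_n | (c <= i)%N].
  apply: young_ones_row; first by case: m {n_eq}.
  by rewrite n_eq addnC; case: m {n_eq} => //= m; rewrite addn0 mulnC.
apply: (lin_summand_induced (subsetT (young_group n (ones c) (pmul p (row_part m))))).
  by move=> h; rewrite /= defY => /chi_ones->; rewrite sgn_repr_coef odd_permV.
rewrite -(dvdn_pcharf charF) /= defY indexg_Sym_geq ?n_eq ?leq_addl //.
exact: ffact_pdvd.
Qed.

Lemma young_sgn_ones al be : (2%:R : F) != 0 -> is_partition al ->
    (sumn al + sumn be)%N = n ->
    {in young n al be, forall h, chi F n al h = (-1) ^+ odd_perm h} ->
  al = ones (size al).
Proof.
move=> two_neq0 /andP[sorted_al al_gt0] sum_n chi_sgn.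
suff al_le1 : all (fun x => x <= 1)%N al.
  apply/all_pred1P/allP => x al_x.
  by rewrite /= eqn_leq (allP al_le1 x al_x) (allP al_gt0 x al_x).
case: al sorted_al {al_gt0} sum_n chi_sgn => //= x al sorted_al sum_n chi_sgn.
have le_x1 : (x <= 1)%N.
  rewrite leqNgt; apply/negP => /young_tperm/(_ sum_n)[t Yt [chi_t odd_t]].
  move: (chi_sgn t Yt); rewrite chi_t odd_t expr1 => /eqP.
  by rewrite -subr_eq0 opprK (negbTE two_neq0).
have ge_trans : transitive geq by move=> a b d le_ba le_db; apply: leq_trans le_db le_ba.
rewrite le_x1; apply/allP => y al_y; apply: leq_trans le_x1.
exact: (allP (order_path_min ge_trans sorted_al)).
Qed.

End SignedYoung.

Theorem lemma5p4 (F : fieldType) (p : nat) (p_prime : prime p) (p_odd : odd p)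
    (charF : p \in [pchar F]%R) (n m c : nat) (n_gt0 : (0 < n)%N)
    (c_lt_p : (c < p)%N) (n_eq : n = (m * p + c)%N) :
  is_signed_young F p n (ones c) (row_part m) (sgn_repr F n).
Proof.
split; [exact: lin_indecomposable | exact: Mperm_ones_row_sgn |].
move=> al be al_part _ sum_n /sgn_summand_Mperm[chi_sgn idx_neq0].
have two_neq0 : (2%:R != 0 :> F)%R.
  by rewrite -(dvdn_pcharf charF) dvdn_prime2 //; apply: contraTneq p_odd => ->.
have al_ones := young_sgn_ones two_neq0 al_part sum_n chi_sgn.
rewrite al_ones sumn_nseq mul1n in sum_n; rewrite al_ones in idx_neq0 *.
apply: (pdominates_ones_row _ sum_n n_eq); rewrite leqNgt; apply: contra idx_neq0 => lt_ca.
by rewrite -(dvdn_pcharf charF) (young_ones_indexg_dvd p_prime n_eq sum_n lt_ca).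
Qed.
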